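(* Let $G=\mathrm{PSL}(2,q)$ with $q$ an odd prime power, let $r,t$ be distinct primes with $q\equiv\pm1\pmod{2rt}$, and let $\varepsilon\in\mathrm{VPA}_{rt}(G)$. Then $t$ divides $\widetilde{\varepsilon}_1(t)$ and $r$ divides $\widetilde{\varepsilon}_1(r)$.
   Context: $\zeta_k$ denotes a complex primitive $k$-th root of unity; $\mathrm{Tr}_{F/K}$ is the trace map; $\sum_{x^G}$ is a sum over representatives of conjugacy classes of $G$; Brauer characters modulo a prime are w.r.t. a sufficiently large modular system. $\mathrm{VPA}_n(G)$ is the set of lists $\varepsilon=(\varepsilon_d)_{d\mid n}$ of integer-valued class functions of $G$ indexed by positive divisors of $n$ such that: (V1) $\sum_{x^G}\varepsilon_d(x)=1$ for each $d$; (V2) $\varepsilon_d(1)=0$ if $d\ne n$; (V3) $\varepsilon_d(x)=0$ if $|x|$ does not divide $n/d$; (V4) for every ordinary character $\chi$ of $G$ or Brauer character $\chi$ of $G$ modulo a prime not dividing $n$ and every $l\in\mathbb{Z}$, $\frac1n\sum_{x^G}\sum_{d\mid n}\varepsilon_d(x)\mathrm{Tr}_{\mathbb{Q}(\zeta_n^d)/\mathbb{Q}}(\chi(x)\zeta_n^{-ld})$ is a non-negative integer. The accumulated virtual partial augmentation is $\widetilde{\varepsilon}_d(m)=\sum\varepsilon_d(g)$, summed over representatives $g$ of the conjugacy classes of elements of $G$ of order $m$. *)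

From HB Require Import structures.
From mathcomp Require Import all_boot all_order all_algebra all_fingroup all_solvable all_field all_character.
Set Implicit Arguments. Unset Strict Implicit. Unset Printing Implicit Defensive.
Import Order.TTheory GRing.Theory Num.Theory.
Local Open Scope ring_scope.

Definition SL2_set (F : finFieldType) : {set {'GL_2[F]}} :=
  [set g : {'GL_2[F]} | \det (GLval g) == 1].

Lemma SL2_group_set (F : finFieldType) : group_set (SL2_set F).
Proof.
apply/group_setP; split; first by rewrite inE GL_1E det1.
by move=> x y; rewrite !inE GL_ME det_mulmx => /eqP-> /eqP->; rewrite mulr1.
Qed.

Canonical SL2 (F : finFieldType) : {group {'GL_2[F]}} := Group (SL2_group_set F).

Definition PSL2_type (F : finFieldType) := coset_of 'Z(SL2 F).
Definition PSL2 (F : finFieldType) : {group PSL2_type F} := (SL2 F / 'Z(SL2 F))%G.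

(* Qn_aut k m is an automorphism of algC sending every m-th root of unity
   z to z^k when k is coprime to m (restricting to the element
   sigma_k of Gal(Q(zeta_m)/Q)). *)
Definition Qn_aut (k m : nat) : {rmorphism algC -> algC} :=
  match coprime k m as b return coprime k m = b -> {rmorphism algC -> algC} with
  | true => fun h => sval (Qn_aut_exists h)
  | false => fun _ => sval (Qn_aut_exists (coprime1n m))
  end erefl.

(* Tr_{Q(zeta_m)/Q}(z) = sum over Gal(Q(zeta_m)/Q) = {sigma_k | k in (Z/m)^x},
   meaningful for z in Q(zeta_m). *)
Definition cycloTr (m : nat) (z : algC) : algC :=
  \sum_(k < m | coprime k m) Qn_aut k m z.

Section Brauer.
Variable gT : finGroupType.

(* Brauer value of a representation over a finite field k, using the lift
   lam : k^x -> C^x of (p'-)roots of unity: sum of lifted eigenvalues with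
   multiplicities (dimension of eigenspaces). *)
Definition brauer_val (k : finFieldType) (lam : k -> algC) (G : {group gT}) m
    (rG : mx_representation k G m) (x : gT) : algC :=
  \sum_(a : k | a != 0) (\rank (eigenspace (rG x) a))%:R * lam a.

(* chi is a Brauer character of G modulo the prime p (w.r.t. a sufficiently
   large modular system): it is afforded, on p-regular elements, by a
   representation over a finite field k of characteristic p containing
   all |G|_{p'}-th roots of unity, via an injective homomorphism lam
   from k^x (a group of p'-roots of unity) to C^x. *)
Definition is_brauer_char (G : {group gT}) (p : nat) (chi : gT -> algC) : Prop :=
  exists (k : finFieldType) (lam : k -> algC) (m : nat)
         (rG : mx_representation k G m),
    [/\ p \in [pchar k], (#|G|`_p^' %| #|k|.-1)%N,
        lam 1 = 1 /\ {in [pred a | a != 0] &, {morph lam : a b / a * b}},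
        {in [pred a | a != 0] &, injective lam} &
        forall x, x \in G -> p_elt (p^')%N x -> chi x = brauer_val lam rG x].

(* eps d is an integer-valued class function of G, given by its value
   eps d C on each conjugacy class C; eps_d(x) = eps d (x ^: G). *)
Definition V4_expr (G : {group gT}) (n : nat) (eps : nat -> {set gT} -> int)
    (chi : gT -> algC) (z : algC) (l : int) : algC :=
  n%:R^-1 * \sum_(C in classes G) \sum_(d <- divisors n)
     (eps d C)%:~R * cycloTr (n %/ d) (chi (repr C) * (z ^+ d) ^ (- l)).

Definition VPA (G : {group gT}) (n : nat) (eps : nat -> {set gT} -> int) : Prop :=
  [/\ forall d, (d %| n)%N -> \sum_(C in classes G) eps d C = 1,
      forall d, (d %| n)%N -> d != n -> eps d (1%g ^: G)%g = 0,
      forall d C, (d %| n)%N -> C \in classes G ->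
                  ~~ (#[repr C]%g %| n %/ d)%N -> eps d C = 0 &
      forall z : algC, n.-primitive_root z -> forall l : int,
        (forall chi : 'CF(G), chi \is a character ->
           V4_expr G n eps (fun x => chi x) z l \in Num.nat) /\
        (forall (p : nat) (chi : gT -> algC), prime p -> ~~ (p %| n)%N ->
           is_brauer_char G p chi -> V4_expr G n eps chi z l \in Num.nat)].

Definition acc_vpa (G : {group gT}) (eps : nat -> {set gT} -> int) (d m : nat) : int :=
  \sum_(C in classes G | #[repr C]%g == m) eps d C.

End Brauer.

(** Let [pi] be the permutation character of [G] on the cosets of a Sylow
    [t]-subgroup [P]: it is integral, vanishes off the [t]-elements, and
    [pi x = #|G : P| (mod t)] on them, since a [t]-group acting on the cosets
    fixes as many points as there are cosets, modulo [t].  Comparing the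
    multiplicities (V4) of [pi] for [l = 1] and [l = r], the terms for
    [d = r, t, rt] cancel ([eps_t] lives on elements of order [r], where [pi]
    is zero), while for [d = 1] the traces of a primitive [rt]-th and [t]-th
    root of unity differ by [r].  Hence [t] divides [\sum_x eps_1(x) pi(x)],
    which is [#|G : P| * eps~_1(t)] modulo [t].  Nothing specific to
    [PSL(2,q)] is used. *)

From HB Require Import structures.
From mathcomp Require Import all_boot all_order all_algebra all_fingroup all_solvable all_field all_character.
From mathcomp Require Import ring.
Set Implicit Arguments.
Unset Strict Implicit.
Unset Printing Implicit Defensive.

Import Order.TTheory GRing.Theory Num.Theory.
Local Open Scope group_scope.
Local Open Scope ring_scope.

Lemma sum_expr_unity (R : idomainType) (v : R) m : v ^+ m = 1 ->
  \sum_(i < m) v ^+ i = if v == 1 then m%:R else 0.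
Proof.
move=> vm; have [->|v1] := eqVneq v 1.
  by under eq_bigr do rewrite expr1n; rewrite sumr_const card_ord.
apply/eqP; move: (subrX1 v m); rewrite vm subrr => /esym/eqP.
by rewrite mulf_eq0 subr_eq0 (negPf v1).
Qed.

Lemma sum_coprime_prime_expr (R : idomainType) t (w : R) :
  prime t -> w ^+ t = 1 -> w != 1 -> \sum_(k < t | coprime k t) w ^+ k = -1.
Proof.
move=> pt wt w1; have t_gt0 := prime_gt0 pt.
have := sum_expr_unity wt; rewrite (negPf w1) (bigD1 (Ordinal t_gt0)) //=.
rewrite expr0 => /eqP; rewrite addrC addr_eq0 => /eqP <-.
apply: eq_bigl => k.
rewrite coprime_sym prime_coprime // -val_eqE /=.
by case: k => [[|k] lt_kt]; rewrite /= ?dvdn0 ?gtnNdvd.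
Qed.

Lemma sum_dvdn_ord (V : nmodType) p m (f : nat -> V) : (0 < p)%N ->
  \sum_(k < p * m | (p %| k)%N) f k = \sum_(j < m) f (p * j)%N.
Proof.
move=> p_gt0; rewrite -(big_mkord (dvdn p)) -(big_mkord xpredT (f \o muln p)).
elim: m => [|m IHm]; first by rewrite muln0 !big_geq.
rewrite big_nat_recr //= -IHm mulnS addnC (big_cat_nat (leq0n _) (leq_addr _ _)).
congr (_ + _); rewrite -{1}(add0n (p * m)%N) big_addn addKn.
rewrite big_ltn_cond // add0n dvdn_mulr //= big1_seq ?addr0 // => k /andP[].
rewrite dvdn_addl ?dvdn_mulr // mem_iota add1n subn1 prednK // => p_k /andP[].
by move=> k_gt0; rewrite ltnNge dvdn_leq.
Qed.

Lemma sum_coprime_mul_primes (V : zmodType) r t (f : nat -> V) :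
  prime r -> prime t -> r != t ->
  \sum_(k < r * t | coprime k (r * t)) f k =
    \sum_(k < r * t) f k - \sum_(j < t) f (r * j)%N - \sum_(j < r) f (t * j)%N
    + f 0%N.
Proof.
move=> pr pt rt; have co_rt : coprime r t by rewrite prime_coprime ?dvdn_prime2.
rewrite -sum_dvdn_ord ?prime_gt0 // -sum_dvdn_ord ?prime_gt0 // [(t * r)%N]mulnC.
have rt_gt0 : (0 < r * t)%N by rewrite muln_gt0 !prime_gt0.
have -> : f 0%N = \sum_(k < r * t | k == Ordinal rt_gt0) f k by rewrite big_pred1_eq.
rewrite (big_mkcond (fun k : 'I__ => coprime k _)).
rewrite (big_mkcond (fun k : 'I__ => r %| k)%N) (big_mkcond (fun k : 'I__ => t %| k)%N).
rewrite (big_mkcond (fun k : 'I__ => k == _)) -!sumrB -big_split /=.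
apply: eq_bigr => k _; rewrite coprimeMr ![coprime k _]coprime_sym !prime_coprime //.
have -> : (k == Ordinal rt_gt0) = (r %| k)%N && (t %| k)%N.
  rewrite -val_eqE -Gauss_dvd //=; case: k => -[|k] lt_k /=; first by rewrite dvdn0.
  by rewrite gtnNdvd.
by case: (r %| k)%N; case: (t %| k)%N; rewrite /= ?subr0 ?addr0 ?subrr ?sub0r ?addNr.
Qed.

Lemma sum_coprime_expr_mul_primes (R : idomainType) r t (v : R) :
  prime r -> prime t -> r != t -> v ^+ (r * t) = 1 ->
  \sum_(k < r * t | coprime k (r * t)) v ^+ k =
    (if v == 1 then (r * t)%:R else 0) - (if v ^+ r == 1 then t%:R else 0)
    - (if v ^+ t == 1 then r%:R else 0) + 1.
Proof.
move=> pr pt rt v_rt; rewrite sum_coprime_mul_primes // expr0 sum_expr_unity //.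
have v_r : (v ^+ r) ^+ t = 1 by rewrite -exprM.
have v_t : (v ^+ t) ^+ r = 1 by rewrite -exprM mulnC.
rewrite -(sum_expr_unity v_r) -(sum_expr_unity v_t).
by congr (_ - _ - _ + _); apply: eq_bigr => j _; rewrite exprM.
Qed.

Lemma Qn_autE k m (w : algC) : coprime k m -> w ^+ m = 1 -> Qn_aut k m w = w ^+ k.
Proof.
rewrite /Qn_aut => co_km wm; move: (erefl (coprime k m)).
case: {2 3}(coprime k m) => [co|]; first by case: (Qn_aut_exists co) => u /= ->.
by rewrite co_km.
Qed.

Lemma cycloTr_intrM m (a w : algC) : a \in Num.int -> w ^+ m = 1 ->
  cycloTr m (a * w) = a * \sum_(k < m | coprime k m) w ^+ k.
Proof.
move=> a_int wm; rewrite /cycloTr big_distrr; apply: eq_bigr => k co_km.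
by rewrite rmorphM aut_intr ?Qn_autE.
Qed.

Section SylowPermutationCharacter.

Variables (gT : finGroupType) (G P : {group gT}).

Definition fix_rcosets x := #|rcosets P G :&: ('Fix_'Rs[x])%g|.

Lemma cfInd1E_fix_rcosets x : P \subset G -> x \in G ->
  'Ind[G, P] 1 x = (fix_rcosets x)%:R.
Proof.
move=> sPG Gx; rewrite cfIndE // (reindex_inj invg_inj) /=.
rewrite (eq_bigl [in G]) => [|y]; last by rewrite groupV.
have partP := rcosets_partition sPG; rewrite -{1}(cover_partition partP).
case/and3P: partP => _ tiP _; rewrite big_trivIset //.
rewrite (eq_bigr (fun B => #|P|%:R * (B \in ('Fix_'Rs[x])%g)%:R)); last first.
  move=> _ /rcosetsP[h Gh ->].
  rewrite (eq_bigr (fun=> (P :* h \in ('Fix_'Rs[x])%g)%:R)) => [|_ /rcosetP[y Py ->]].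
    by rewrite sumr_const card_rcoset mulr_natl.
  rewrite cfun1E; congr (_%:R).
  rewrite (sameP afix1P eqP) /= rcosetE -rcosetM (sameP eqP rcoset_eqP).
  by rewrite mem_rcoset invMg conjgM groupJr ?groupV // conjgE invgK mulgA.
rewrite -big_distrr /= mulrA mulVf ?neq0CG // mul1r /fix_rcosets -sum1_card natr_sum.
rewrite big_mkcond [RHS]big_mkcond; apply: eq_bigr => B _.
by rewrite [in RHS]inE; case: (B \in rcosets P G); case: (B \in _).
Qed.

Variable p : nat.
Hypothesis sylP : p.-Sylow(G) P.

Lemma fix_rcosets_Sylow_mod x : x \in G -> p.-elt x ->
  (fix_rcosets x = #|G : P| %[mod p])%N.
Proof.
move=> Gx p_x; rewrite /fix_rcosets -afix_cycle.
rewrite -(pgroup_fix_mod p_x) //; apply: subset_trans (actsRs_rcosets P G).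
by rewrite cycle_subG.
Qed.

Lemma fix_rcosets_Sylow_p'elt x : x \in G -> ~~ p.-elt x -> fix_rcosets x = 0%N.
Proof.
move=> Gx p'x; apply/eqP; rewrite -(pnatr_eq0 algC) -cfInd1E_fix_rcosets ?(pHall_sub sylP) //.
rewrite cfIndE ?(pHall_sub sylP) // big1 ?mulr0 // => y _.
rewrite cfun1E; case P_xy: (x ^ y \in P)%g => //.
by move: p'x; rewrite -(p_eltJ _ x y) (mem_p_elt (pHall_pgroup sylP) P_xy).
Qed.

End SylowPermutationCharacter.

Section VirtualPartialAugmentation.

Variables (gT : finGroupType) (G : {group gT}) (r t : nat).
Variable eps : nat -> {set gT} -> int.
Hypotheses (pr : prime r) (pt : prime t) (neq_rt : r != t).
Hypothesis vpaG : VPA G (r * t) eps.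

Let rt_gt0 : (0 < r * t)%N. Proof. by rewrite muln_gt0 !prime_gt0. Qed.

Lemma dvdn_mul_primes d :
  (d %| r * t)%N -> [\/ d = 1%N, d = r, d = t | d = (r * t)%N].
Proof.
move=> d_rt; have [r_d|r_nd] := boolP (r %| d)%N.
  case/dvdnP: r_d d_rt => k ->; rewrite mulnC dvdn_pmul2l ?prime_gt0 //.
  by case/primeP: pt => _ /[apply] /orP[] /eqP->; [rewrite muln1; apply: Or42|apply: Or44].
move: d_rt; rewrite Gauss_dvdr; last by rewrite coprime_sym prime_coprime.
by case/primeP: pt => _ /[apply] /orP[] /eqP->; [apply: Or41|apply: Or43].
Qed.

Lemma vpa_order d C : (d %| r * t)%N -> C \in classes G -> eps d C != 0 ->
  (#[repr C] %| (r * t) %/ d)%N /\ (d != (r * t)%N -> #[repr C] != 1%N).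
Proof.
case: vpaG => _ V2 V3 _ d_rt CG eps_dC; split; first by apply: contraR eps_dC => /V3->.
move=> d_n; apply: contra eps_dC; rewrite order_eq1 => /eqP C1.
by case/repr_classesP: CG => _ ->; rewrite C1 V2.
Qed.

Lemma V4_term_sub z (c : algC) C d :
    (r * t).-primitive_root z -> C \in classes G -> c \in Num.int ->
    (#[repr C] = r -> c = 0) -> (d %| r * t)%N ->
  (eps d C)%:~R * (cycloTr ((r * t) %/ d) (c * (z ^+ d) ^ (-1))
                   - cycloTr ((r * t) %/ d) (c * (z ^+ d) ^ (- r%:Z)))
  = if d == 1%N then r%:R * (eps 1%N C)%:~R * c else 0.
Proof.
move=> prim_z CG c_int c_r d_rt; rewrite exprN1 -exprnN -!exprVn -exprM.
set w := z^-1.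
have w_eq1 i : (w ^+ i == 1) = (r * t %| i)%N.
  by rewrite exprVn invr_eq1 (prim_order_dvd prim_z).
have w_rt i : (w ^+ i) ^+ (r * t) = 1 by apply/eqP; rewrite -exprM w_eq1 dvdn_mull.
have [r_gt1 t_gt1] := (prime_gt1 pr, prime_gt1 pt).
have rt_nd1 : ~~ (r * t %| 1)%N by rewrite dvdn1 muln_eq1 negb_and gtn_eqF.
have rt_ndr : ~~ (r * t %| r)%N.
  by rewrite -[X in (_ %| X)%N]muln1 dvdn_pmul2l ?prime_gt0 // dvdn1 gtn_eqF.
have rt_ndt : ~~ (r * t %| t)%N.
  by rewrite -[X in (_ %| X)%N]mul1n dvdn_pmul2r ?prime_gt0 // dvdn1 gtn_eqF.
have rt_ndrr : ~~ (r * t %| r * r)%N.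
  by rewrite dvdn_pmul2l ?prime_gt0 // dvdn_prime2 // eq_sym.
case: (dvdn_mul_primes d_rt) => ->.
- rewrite divn1 eqxx mul1n !cycloTr_intrM ?w_rt //.
  rewrite !sum_coprime_expr_mul_primes ?w_rt // -!exprM !w_eq1 !mul1n dvdnn.
  rewrite (negPf rt_nd1) (negPf rt_ndr) (negPf rt_ndt) (negPf rt_ndrr); ring.
- have w_t i : (r %| i)%N -> (w ^+ i) ^+ t = 1.
    by case/dvdnP=> k ->; apply/eqP; rewrite -exprM w_eq1 -mulnA dvdn_mull.
  rewrite mulKn ?prime_gt0 // (gtn_eqF r_gt1) !cycloTr_intrM ?w_t ?dvdn_mulr //.
  by rewrite !sum_coprime_prime_expr ?w_t ?dvdn_mulr ?w_eq1 // subrr mulr0.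
- rewrite (gtn_eqF t_gt1); have [->|eps_tC] := eqVneq (eps t C) 0; first by rewrite mul0r.
  have [] := vpa_order _ CG eps_tC; first by rewrite dvdn_mull.
  rewrite mulnK ?prime_gt0 // => o_r.
  move=> /(_ (negbT (ltn_eqF (ltn_Pmull r_gt1 (prime_gt0 pt))))) o_n1.
  have /c_r-> : #[repr C] = r by case/primeP: pr o_n1 => _ /(_ _ o_r) /orP[] /eqP->.
  by rewrite !mul0r subrr mulr0.
- have w1 : w ^+ (r * t) = 1 by apply/eqP; rewrite w_eq1.
  rewrite ifN; last by apply: contra rt_nd1 => /eqP->.
  by rewrite [w ^+ (_ * r)]exprM w1 expr1n subrr mulr0.
Qed.

Lemma V4_expr_sub z (chi : gT -> algC) :
    (r * t).-primitive_root z ->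
    (forall C, C \in classes G -> chi (repr C) \in Num.int) ->
    (forall C, C \in classes G -> #[repr C] = r -> chi (repr C) = 0) ->
  (r * t)%:R * (V4_expr G (r * t) eps chi z 1 - V4_expr G (r * t) eps chi z r%:Z)
  = r%:R * \sum_(C in classes G) (eps 1%N C)%:~R * chi (repr C).
Proof.
move=> prim_z chi_int chi_r.
rewrite /V4_expr -mulrBr mulrA mulfV ?pnatr_eq0 -?lt0n // mul1r -sumrB big_distrr.
apply: eq_bigr => C CG; rewrite -sumrB.
rewrite (eq_big_seq (fun d => if d == 1%N then r%:R * (eps 1%N C)%:~R * chi (repr C) else 0)).
  by rewrite -big_mkcond -big_filter filter_pred1_uniq ?divisors_uniq ?big_seq1 -?mulrA //
    -dvdn_divisors.
by move=> d; rewrite -dvdn_divisors // -mulrBr => d_rt; apply: V4_term_sub; auto.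
Qed.

Lemma dvdz_sum_eps1_char (chi : 'CF(G)) (n : int) :
    chi \is a character ->
    (forall C, C \in classes G -> chi (repr C) \in Num.int) ->
    (forall C, C \in classes G -> #[repr C] = r -> chi (repr C) = 0) ->
    n%:~R = \sum_(C in classes G) (eps 1%N C)%:~R * chi (repr C) ->
  (t%:Z %| n)%Z.
Proof.
move=> chi_char chi_int chi_r def_n.
have [z prim_z] := C_prim_root_exists rt_gt0.
case: vpaG => _ _ _ /(_ z prim_z) V4.
have V4_nat l : V4_expr G (r * t) eps (fun x => chi x) z l \in Num.nat.
  by case: (V4 l) => /(_ chi chi_char).
have [[m1 def_m1] [mr def_mr]] := (natrP (V4_nat 1), natrP (V4_nat r%:Z)).
have := V4_expr_sub prim_z chi_int chi_r; rewrite def_m1 def_mr -def_n.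
have -> : (r * t)%:R * (m1%:R - mr%:R) = (r%:Z * (t%:Z * (m1%:Z - mr%:Z)))%:~R :> algC.
  by rewrite !intrM intrB -!pmulrn mulrA -natrM.
rewrite -[r%:R]/((r%:Z)%:~R : algC) -intrM => /intr_inj /mulfI <-.
  exact: dvdz_mulr.
by rewrite eqz_nat gtn_eqF ?prime_gt0.
Qed.

Lemma sum_eps1_fix_rcosets_mod (P : {group gT}) : t.-Sylow(G) P ->
  (t%:Z %| \sum_(C in classes G) eps 1%N C * (fix_rcosets G P (repr C))%:Z
           - #|G : P|%:Z * acc_vpa G eps 1 t)%Z.
Proof.
move=> sylP; rewrite /acc_vpa big_distrr big_mkcondr -sumrB /=.
apply: rpred_sum => C CG; have GC : repr C \in G by case/repr_classesP: CG.
have [->|eps_C] := eqVneq (eps 1%N C) 0.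
  by rewrite mul0r; case: ifP; rewrite ?mulr0 subrr rpred0.
have n_neq1 : 1%N != (r * t)%N by rewrite eq_sym muln_eq1 negb_and gtn_eqF ?prime_gt1.
have [] := vpa_order (dvd1n _) CG eps_C; rewrite divn1 => o_rt /(_ n_neq1) o_n1.
have fix0 : ~~ t.-elt (repr C) -> fix_rcosets G P (repr C) = 0%N.
  exact: fix_rcosets_Sylow_p'elt sylP _ GC.
case: (dvdn_mul_primes o_rt) => o_C; first by rewrite o_C in o_n1.
- rewrite fix0; last by rewrite /p_elt o_C pnatE // inE.
  by rewrite o_C (negPf neq_rt) !mulr0 subr0 rpred0.
- rewrite o_C eqxx (mulrC #|G : P|%:Z) -mulrBr; apply: dvdz_mull.
  by rewrite -eqz_mod_dvd !modz_nat fix_rcosets_Sylow_mod // /p_elt o_C pnatE // inE.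
- have neq_rt_t : (r * t)%N != t by rewrite gtn_eqF // ltn_Pmull ?prime_gt1 ?prime_gt0.
  rewrite fix0; last by rewrite /p_elt o_C pnatM !pnatE // !inE (negPf neq_rt).
  by rewrite o_C (negPf neq_rt_t) !mulr0 subr0 rpred0.
Qed.

Lemma acc_vpa1_dvd : (t%:Z %| acc_vpa G eps 1 t)%Z.
Proof.
have [P sylP] := Sylow_exists t G; have sPG := pHall_sub sylP.
have IndE C : C \in classes G -> 'Ind[G, P] 1 (repr C) = (fix_rcosets G P (repr C))%:R.
  by case/repr_classesP => GC _; rewrite cfInd1E_fix_rcosets.
have t_sum : (t%:Z %| \sum_(C in classes G) eps 1%N C * (fix_rcosets G P (repr C))%:Z)%Z.
  apply: (@dvdz_sum_eps1_char ('Ind[G, P] 1)).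
  - by rewrite cfInd_char ?cfun1_char.
  - by move=> C CG; rewrite IndE // rpred_nat.
  - move=> C CG o_r; have GC : repr C \in G by case/repr_classesP: CG.
    by rewrite IndE // (fix_rcosets_Sylow_p'elt sylP GC) // /p_elt o_r pnatE // inE.
  - by rewrite rmorph_sum; apply: eq_bigr => C CG; rewrite rmorphM /= IndE.
have t'index : coprimez t%:Z #|G : P|%:Z.
  by rewrite coprimezE /= prime_coprime // -p'natE //; case/and3P: sylP.
rewrite -(Gauss_dvdzr _ t'index).
have := rpredB t_sum (sum_eps1_fix_rcosets_mod sylP).
by rewrite opprB addrC subrK.
Qed.

End VirtualPartialAugmentation.

Local Close Scope ring_scope.
Local Close Scope group_scope.

Theorem lemma4p5 (F : finFieldType) (r t : nat)
    (eps : nat -> {set PSL2_type F} -> int) :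
  odd #|F| -> prime r -> prime t -> r != t ->
  (2 * (r * t) %| #|F| - 1) || (2 * (r * t) %| #|F| + 1) ->
  VPA (PSL2 F) (r * t) eps ->
  (t%:Z %| acc_vpa (PSL2 F) eps 1 t)%Z /\ (r%:Z %| acc_vpa (PSL2 F) eps 1 r)%Z.
Proof.
move=> _ pr pt neq_rt _ vpaG; split; first exact: acc_vpa1_dvd vpaG.
by apply: (acc_vpa1_dvd pt pr); rewrite 1?eq_sym // mulnC.
Qed.
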